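(* Let $\alpha\in\ell^2$, let $I$ be a finite interval in $\mathbb{N}$ with endpoints $a\le b$, and let $\epsilon>0$. Suppose that the set $S(\epsilon)=\{k\in\mathbb{N}: Z_k\subseteq I,\ \sigma_k>\epsilon\}$ has at least $4$ distinct elements. Then $J(I)>\epsilon/2$ and $L(I)>\epsilon/(2\sqrt2)$.
   Context: $\mathbb{N}=\{0,1,2,\dots\}$; $Z_k=[2^k,2^{k+1}-1]\cap\mathbb{N}$; $\sigma_k=(\sum_{j=2^k}^{2^{k+1}-1}(j+1)|\alpha_j|^2)^{1/2}$. $J(I)=\inf_{c\in I}\max(A_c,B_c)$ with $A_c=\sup_{a\le s\le c}(c-s)^{1/2}(\sum_{k=a}^s|\alpha_k|^2)^{1/2}$, $B_c=\sup_{c\le s\le b}(s-c)^{1/2}(\sum_{k=s}^b|\alpha_k|^2)^{1/2}$. $L(I)=(\sup_{\|f\|_{2,I}\le1}l(I,f)/\mu(I))^{1/2}$ where $\mu(I)=\sum_{k\in I}|\alpha_k|^2$, $\|f\|_{2,I}=(\sum_{k\in I}|f(k)|^2)^{1/2}$, $l(I,f)=\sum_{k\in I}\sum_{n\in I\setminus\{k\}}|\alpha_k\alpha_n\sum_{j=\min(k,n)+1}^{\max(k,n)}f(j)|^2$ (sup over $f$ supported in $I$; $L(I)=0$ if $\alpha$ vanishes on $I$). *)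

From mathcomp Require Import all_boot all_order all_algebra.
From mathcomp Require Import all_classical all_reals all_analysis.
From mathcomp.real_closed Require Import complex.
Import Order.TTheory GRing.Theory Num.Theory numFieldNormedType.Exports.
Set Implicit Arguments. Unset Strict Implicit. Unset Printing Implicit Defensive.
Local Open Scope classical_set_scope.
Local Open Scope ring_scope.

Section Defs.
Variable R : realType.

Definition nrm2 (z : R[i]) : R := complex.Re z ^+ 2 + complex.Im z ^+ 2.

Definition Iset_nat (a b : nat) : set nat := [set j | (a <= j <= b)%N].

Definition Zset_nat (k : nat) : set nat := [set j | (2 ^ k <= j <= 2 ^ k.+1 - 1)%N].

Definition sigma_of (alpha : nat -> R[i]) (k : nat) : R :=
  Num.sqrt (\sum_(2 ^ k <= j < 2 ^ k.+1) (j.+1)%:R * nrm2 (alpha j)).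

Definition Seps_set (alpha : nat -> R[i]) (a b : nat) (eps : R) : set nat :=
  [set k | Zset_nat k `<=` Iset_nat a b /\ eps < sigma_of alpha k].

Definition A_of (alpha : nat -> R[i]) (a c : nat) : R :=
  sup [set Num.sqrt ((c - s)%:R) * Num.sqrt (\sum_(a <= k < s.+1) nrm2 (alpha k))
      | s in Iset_nat a c].

Definition B_of (alpha : nat -> R[i]) (b c : nat) : R :=
  sup [set Num.sqrt ((s - c)%:R) * Num.sqrt (\sum_(s <= k < b.+1) nrm2 (alpha k))
      | s in Iset_nat c b].

Definition J_of (alpha : nat -> R[i]) (a b : nat) : R :=
  inf [set Num.max (A_of alpha a c) (B_of alpha b c) | c in Iset_nat a b].

Definition mu_of (alpha : nat -> R[i]) (a b : nat) : R :=
  \sum_(a <= k < b.+1) nrm2 (alpha k).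

Definition l_of (alpha : nat -> R[i]) (a b : nat) (f : nat -> R[i]) : R :=
  \sum_(a <= k < b.+1) \sum_(a <= n < b.+1 | n != k)
     nrm2 (alpha k * alpha n * \sum_((minn k n).+1 <= j < (maxn k n).+1) f j).

Definition norm2I (a b : nat) (f : nat -> R[i]) : R :=
  Num.sqrt (\sum_(a <= k < b.+1) nrm2 (f k)).

Definition L_of (alpha : nat -> R[i]) (a b : nat) : R :=
  if mu_of alpha a b == 0 then 0 else
  Num.sqrt (sup [set l_of alpha a b f / mu_of alpha a b
                | f in [set f : nat -> R[i] |
                        (forall j, ~ Iset_nat a b j -> f j = 0) /\ norm2I a b f <= 1]]).

End Defs.

From mathcomp Require Import all_boot all_order all_algebra.
From mathcomp Require Import all_classical all_reals all_analysis.
From mathcomp.real_closed Require Import complex.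
From mathcomp Require Import ring lra zify.
Import Order.TTheory GRing.Theory Num.Theory numFieldNormedType.Exports.
Local Open Scope classical_set_scope.
Local Open Scope ring_scope.

(* Write m_k for the mass of |alpha|^2 on the dyadic block Z_k; sigma_k > eps gives
   2^(k+1) m_k > eps^2.  A split point c of I is then either far left of Z_k4
   (2c <= 2^k4), so that (2^k4 - c) mu([2^k4, b]) > eps^2/4, or far right of Z_k1
   (c >= 2^(k1+2)), so that (c - 2^(k1+1) + 1) mu([a, 2^(k1+1) - 1]) > eps^2.
   For J take c to be any point of I: this bounds B_c or A_c from below.  For L take
   c to be a median t of mu on I and test l(I, .) on the normalised indicator f of
   (p, q], for which l(I, f) >= (q - p) mu([a, p]) mu([q, b]); the median makes the
   remaining factor at least mu(I)/2. *)

Section NatIntervals.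
Context {R : realType}.
Implicit Types (F g : nat -> R) (a b : nat).

Lemma Iset_nat_argmin g a b : (a <= b)%N ->
  exists2 c, Iset_nat a b c & forall c', Iset_nat a b c' -> g c <= g c'.
Proof.
move=> hab; pose P := [pred i : 'I_b.+1 | (a <= i)%N].
have Pb : P ord_max by rewrite inE.
case: (arg_minP (g \o val) Pb) => c; rewrite inE => hac hmin.
exists (val c); first by rewrite /Iset_nat /= hac -ltnS ltn_ord.
move=> c' /andP[hac' hc'b]; have := hmin (Ordinal (hc'b : (c' < b.+1)%N)).
by rewrite inE; apply.
Qed.

Lemma Iset_nat_argmax g a b : (a <= b)%N ->
  exists2 c, Iset_nat a b c & forall c', Iset_nat a b c' -> g c' <= g c.
Proof.
move=> /(Iset_nat_argmin (fun c => - g c))[c hc hmin].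
by exists c => // c' /hmin; rewrite lerN2.
Qed.

Lemma le_sup_image_Iset_nat g a b s : Iset_nat a b s ->
  g s <= sup [set g c | c in Iset_nat a b].
Proof.
move=> hs; have /(Iset_nat_argmax g)[c _ hmax] : (a <= b)%N.
  by case/andP: hs; apply: leq_trans.
apply: ub_le_sup; last by exists s.
by exists (g c) => _ [c' hc' <-]; apply: hmax.
Qed.

Lemma lt_inf_image_Iset_nat g a b x : (a <= b)%N ->
  (forall c, Iset_nat a b c -> x < g c) -> x < inf [set g c | c in Iset_nat a b].
Proof.
move=> hab hx; have [c hc hmin] := Iset_nat_argmin g _ _ hab.
apply: lt_le_trans (hx c hc) _; apply: lb_le_inf; first by exists (g c), c.
by move=> _ [c' hc' <-]; apply: hmin.
Qed.

Lemma ler_sum_nat_widen F m n p q : (forall i, 0 <= F i) ->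
  (m <= p)%N -> (q <= n)%N -> \sum_(p <= i < q) F i <= \sum_(m <= i < n) F i.
Proof.
move=> F_ge0 hmp hqn; have [hqp|hpq] := leqP q p; first by rewrite big_geq ?sumr_ge0.
rewrite (big_cat_nat (n := p) hmp) /=; last by lia.
rewrite (big_cat_nat (n := q) (ltnW hpq) hqn) /=.
by rewrite addrCA lerDl addr_ge0 ?sumr_ge0.
Qed.

Lemma sum_nat_median F a b : (forall i, 0 <= F i) -> (a <= b)%N ->
  exists t, [/\ (a <= t <= b)%N,
    \sum_(a <= i < b.+1) F i <= 2 * \sum_(a <= i < t.+1) F i &
    \sum_(a <= i < b.+1) F i <= 2 * \sum_(t <= i < b.+1) F i].
Proof.
move=> F_ge0 hab; set mu := \sum_(a <= i < b.+1) F i.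
have mu_ge0 : 0 <= mu by apply: sumr_ge0.
pose P t := (a <= t)%N && (mu <= 2 * \sum_(a <= i < t.+1) F i).
have Pb : P b by rewrite /P hab /= -/mu; lra.
case: (ex_minnP (ex_intro P b Pb)) => t /andP[hat hpre] hmin.
have htb : (t <= b)%N by apply: hmin.
have hpre' : 2 * \sum_(a <= i < t) F i <= mu.
  case: (ltnP a t) => [|hta]; last by rewrite big_geq // mulr0.
  case: t {hat hpre htb} hmin => // t hmin hat.
  rewrite leNgt; apply/negP => hlt.
  suff : (t.+1 <= t)%N by rewrite ltnn.
  by apply: hmin; rewrite /P -ltnS hat ltW.
have hsplit : mu = \sum_(a <= i < t) F i + \sum_(t <= i < b.+1) F i.
  by rewrite /mu (big_cat_nat (n := t)) // leqW.
by exists t; split; [rewrite hat | | lra].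
Qed.

Lemma sum_nat_indicator (V : nmodType) (v : V) x y p q :
  (x <= p.+1)%N -> (q < y)%N ->
  \sum_(x <= j < y) (if (p < j <= q)%N then v else 0) = v *+ (q - p).
Proof.
move=> hxp hqy; rewrite -subSS -sumr_const_nat.
rewrite (big_nat_widen _ _ _ _ _ hqy) (big_nat_widenl _ _ _ _ _ hxp) big_mkcond /=.
by apply: eq_bigr => j _; rewrite andbC ltnS.
Qed.

End NatIntervals.

Lemma exists_sorted4 {P : nat -> Prop} {k1 k2 k3 k4 : nat} :
  uniq [:: k1; k2; k3; k4] -> P k1 -> P k2 -> P k3 -> P k4 ->
  exists x1 x2 x3 x4, [/\ (x1 < x2 < x3)%N, (x3 < x4)%N & [/\ P x1, P x2, P x3 & P x4]].
Proof.
move=> k_uniq P1 P2 P3 P4; set s := [:: k1; k2; k3; k4].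
have sP x : x \in sort leq s -> P x.
  by rewrite mem_sort !inE => /or4P[] /eqP->.
have : sorted ltn (sort leq s).
  by rewrite ltn_sorted_uniq_leq sort_uniq k_uniq (sort_sorted leq_total).
have : size (sort leq s) = 4%N by rewrite size_sort.
move: sP; case: (sort leq s) => [|x1 [|x2 [|x3 [|x4 []]]]] //= sP _ /and4P[h12 h23 h34 _].
exists x1, x2, x3, x4; rewrite h12 h23 h34.
by split => //; split; apply: sP; rewrite !inE eqxx ?orbT.
Qed.

Section SquaredModulus.
Context {R : realType}.
Implicit Types (z w : R[i]) (x : R).

Lemma nrm2_ge0 z : 0 <= nrm2 z.
Proof. by rewrite /nrm2 addr_ge0 ?sqr_ge0. Qed.

Lemma nrm2M z w : nrm2 (z * w) = nrm2 z * nrm2 w.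
Proof. by case: z => x y; case: w => u v; rewrite /nrm2 /=; ring. Qed.

Lemma nrm2D z w : nrm2 (z + w) <= 2 * (nrm2 z + nrm2 w).
Proof.
case: z => x y; case: w => u v; rewrite /nrm2 /=.
have := sqr_ge0 (x - u); have := sqr_ge0 (y - v); nra.
Qed.

Lemma nrm2_real x : nrm2 x%:C%C = x ^+ 2.
Proof. by rewrite /nrm2 /= expr0n addr0. Qed.

Lemma nrm2_sum_le (r : seq nat) (F : nat -> R[i]) :
  nrm2 (\sum_(i <- r) F i) <= 2 ^+ size r * \sum_(i <- r) nrm2 (F i).
Proof.
elim: r => [|i r IHr]; first by rewrite !big_nil /nrm2 /= expr0n addr0 mulr0.
rewrite !big_cons exprS -mulrA; apply: le_trans (nrm2D _ _) _.
rewrite ler_pM2l // mulrDr; apply: lerD IHr.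
have := nrm2_ge0 (F i); have : 1 <= 2 ^+ size r :> R by apply: exprn_ege1; lra.
nra.
Qed.

End SquaredModulus.

Lemma ltr_sqrt_sqr (R : realType) (x y : R) : 0 <= x -> x ^+ 2 < y -> x < Num.sqrt y.
Proof.
move=> x_ge0 hxy; have y_gt0 : 0 < y by apply: le_lt_trans hxy; rewrite sqr_ge0.
by rewrite -(ltr_pXn2r (n := 2)) ?nnegrE ?sqrtr_ge0 // sqr_sqrtr ?ltW.
Qed.

Definition block_mass {R : realType} (alpha : nat -> R[i]) (k : nat) : R :=
  \sum_(2 ^ k <= j < 2 ^ k.+1) nrm2 (alpha j).

Section Blocks.
Context {R : realType} {alpha : nat -> R[i]}.

Lemma block_mass_ge0 k : 0 <= block_mass alpha k.
Proof. by apply: sumr_ge0 => j _; apply: nrm2_ge0. Qed.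

Lemma block_mass_le_mu_of {k p q : nat} : (p <= 2 ^ k)%N -> (2 ^ k.+1 <= q.+1)%N ->
  block_mass alpha k <= mu_of alpha p q.
Proof. by move=> hp hq; apply: ler_sum_nat_widen => // j; apply: nrm2_ge0. Qed.

Lemma sigma_of_sqr_le k : sigma_of alpha k ^+ 2 <= (2 ^ k.+1)%:R * block_mass alpha k.
Proof.
rewrite sqr_sqrtr; last by apply: sumr_ge0 => j _; rewrite mulr_ge0 ?nrm2_ge0.
rewrite mulr_sumr; apply: ler_sum_nat => j /andP[_ hj].
by rewrite ler_wpM2r ?nrm2_ge0 ?ler_nat.
Qed.

Lemma Seps_set_block {a b : nat} {eps : R} {k : nat} :
  0 <= eps -> Seps_set alpha a b eps k ->
  [/\ (a <= 2 ^ k)%N, (2 ^ k.+1 <= b.+1)%N &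
       eps ^+ 2 < (2 ^ k.+1)%:R * block_mass alpha k].
Proof.
move=> eps_ge0 [Zk_sub sigma_gt]; have pow_gt0 : (0 < 2 ^ k)%N by rewrite expn_gt0.
have /andP[ha _] : Iset_nat a b (2 ^ k)%N.
  by apply: Zk_sub; rewrite /Zset_nat /= leqnn expnS; lia.
have /andP[_ hb] : Iset_nat a b (2 ^ k.+1 - 1)%N.
  by apply: Zk_sub; rewrite /Zset_nat /= leqnn expnS; lia.
split; [done | lia |]; apply: lt_le_trans (sigma_of_sqr_le k).
by rewrite ltr_pXn2r ?nnegrE ?sqrtr_ge0 // (le_lt_trans eps_ge0 sigma_gt).
Qed.

Section SeparatedBlock.
Context {a b : nat} {eps : R} {k : nat}.
Hypotheses (eps_ge0 : 0 <= eps) (Sk : Seps_set alpha a b eps k).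

Lemma Seps_set_left_bound c : (2 ^ k.+2 <= c)%N ->
  eps ^+ 2 < (c - (2 ^ k.+1 - 1))%:R * mu_of alpha a (2 ^ k.+1 - 1).
Proof.
move=> hc; have [ha _ hm] := Seps_set_block eps_ge0 Sk.
have pow_gt0 : (0 < 2 ^ k)%N by rewrite expn_gt0.
apply: lt_le_trans hm _; apply: ler_pM; rewrite ?ler0n ?block_mass_ge0 //.
- by rewrite ler_nat; move: hc; rewrite !expnS; lia.
- by apply: block_mass_le_mu_of; rewrite // expnS; lia.
Qed.

Lemma Seps_set_right_bound c : (2 * c <= 2 ^ k)%N ->
  eps ^+ 2 / 4 < (2 ^ k - c)%:R * mu_of alpha (2 ^ k) b.
Proof.
move=> hc; have [_ hb hm] := Seps_set_block eps_ge0 Sk.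
have hN : (2 ^ k.+1)%:R <= 4 * (2 ^ k - c)%:R :> R.
  by rewrite -natrM ler_nat expnS; lia.
have hmu : block_mass alpha k <= mu_of alpha (2 ^ k) b by apply: block_mass_le_mu_of.
have hX : 0 <= (2 ^ k - c)%:R :> R by rewrite ler0n.
have := ler_wpM2r (block_mass_ge0 k) hN; have := ler_wpM2l hX hmu; lra.
Qed.

End SeparatedBlock.

Lemma sqrt_le_A_of {a c s : nat} : (a <= s <= c)%N ->
  Num.sqrt ((c - s)%:R * mu_of alpha a s) <= A_of alpha a c.
Proof.
move=> hs; rewrite sqrtrM ?ler0n //.
exact: (le_sup_image_Iset_nat (fun s => Num.sqrt (c - s)%:R * Num.sqrt (mu_of alpha a s))).
Qed.

Lemma sqrt_le_B_of {b c s : nat} : (c <= s <= b)%N ->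
  Num.sqrt ((s - c)%:R * mu_of alpha s b) <= B_of alpha b c.
Proof.
move=> hs; rewrite sqrtrM ?ler0n //.
exact: (le_sup_image_Iset_nat (fun s => Num.sqrt (s - c)%:R * Num.sqrt (mu_of alpha s b))).
Qed.

End Blocks.

Section TestFunction.
Variable R : realType.

Definition flat_step (p q j : nat) : R[i] :=
  (if (p < j <= q)%N then (Num.sqrt (q - p)%:R)^-1 else 0)%:C%C.

Variables (p q : nat).
Hypothesis hpq : (p < q)%N.

Let len_gt0 : 0 < (q - p)%:R :> R.
Proof. by rewrite ltr0n subn_gt0. Qed.

Lemma flat_step_out a b : (a <= p)%N -> (q <= b)%N ->
  forall j, ~ Iset_nat a b j -> flat_step p q j = 0.
Proof.
move=> hap hqb j hj; rewrite /flat_step ifF //; apply/negP => /andP[hpj hjq].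
by apply: hj; rewrite /Iset_nat /=; lia.
Qed.

Lemma norm2I_flat_step a b : (a <= p)%N -> (q <= b)%N -> norm2I a b (flat_step p q) = 1.
Proof.
move=> hap hqb; rewrite /norm2I -[RHS]sqrtr1; congr Num.sqrt.
rewrite (eq_bigr (fun j => if (p < j <= q)%N then ((q - p)%:R)^-1 else 0)); last first.
  move=> j _; rewrite nrm2_real /flat_step; case: ifP => _; last by rewrite expr0n.
  by rewrite exprVn sqr_sqrtr ?ler0n.
rewrite sum_nat_indicator ?ltnS //; last exact: leqW.
by rewrite -[LHS]mulr_natr mulVf ?gt_eqF.
Qed.

Lemma nrm2_sum_flat_step k n : (k <= p)%N -> (q <= n)%N ->
  nrm2 (\sum_(k.+1 <= j < n.+1) flat_step p q j) = (q - p)%:R.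
Proof.
move=> hkp hqn; rewrite -rmorph_sum nrm2_real sum_nat_indicator ?ltnS //.
rewrite -[_ *+ _]mulr_natr exprMn exprVn sqr_sqrtr ?ler0n //.
by rewrite expr2 mulrA mulVf ?gt_eqF ?mul1r.
Qed.

End TestFunction.

Section QuadraticForm.
Context {R : realType} {alpha : nat -> R[i]} {a b : nat}.

(* Crude, but the supremum defining [L_of] only needs some upper bound. *)
Lemma l_of_le f : norm2I a b f <= 1 ->
  l_of alpha a b f <= 2 ^+ b.+1 * (mu_of alpha a b * mu_of alpha a b).
Proof.
move=> f_le1; have hf : \sum_(a <= j < b.+1) nrm2 (f j) <= 1.
  by move: f_le1; rewrite /norm2I -[X in _ <= X]sqrtr1 ler_sqrt.
rewrite /mu_of big_distrlr mulr_sumr; apply: ler_sum_nat => k /andP[hak hkb].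
rewrite mulr_sumr big_mkcond; apply: ler_sum_nat => n /andP[han hnb] /=.
case: ifP => _; last by rewrite !mulr_ge0 ?nrm2_ge0 ?exprn_ge0.
rewrite !nrm2M mulrC ler_wpM2r ?mulr_ge0 ?nrm2_ge0 //.
apply: le_trans (nrm2_sum_le _ _) _; rewrite size_iota -[X in _ <= X]mulr1.
apply: ler_pM; rewrite ?exprn_ge0 ?sumr_ge0 //.
- by move=> j _; apply: nrm2_ge0.
- by rewrite ler_eXn2l //; [lia | lra].
- apply: le_trans hf; apply: ler_sum_nat_widen => [j||]; rewrite ?nrm2_ge0 //; lia.
Qed.

Lemma l_of_flat_step_ge p q : (a <= p)%N -> (p < q)%N -> (q <= b)%N ->
  (q - p)%:R * mu_of alpha a p * mu_of alpha q b <= l_of alpha a b (flat_step R p q).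
Proof.
move=> hap hpq hqb; set term := fun k n => nrm2 (alpha k * alpha n *
  \sum_((minn k n).+1 <= j < (maxn k n).+1) flat_step R p q j).
have term_ge0 k n : 0 <= term k n by apply: nrm2_ge0.
have -> : (q - p)%:R * mu_of alpha a p * mu_of alpha q b =
    \sum_(a <= k < p.+1) \sum_(q <= n < b.+1) term k n.
  rewrite -mulrA mulrC /mu_of big_distrlr mulr_suml; apply: eq_big_nat => k /andP[_ hkp].
  rewrite mulr_suml; apply: eq_big_nat => n /andP[hqn _]; rewrite /term.
  by rewrite (minn_idPl _) ?(maxn_idPr _) ?nrm2M ?nrm2_sum_flat_step //; lia.
rewrite /l_of; apply: (@le_trans _ _
  (\sum_(a <= k < p.+1) \sum_(a <= n < b.+1 | n != k) term k n)); last first.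
  by apply: ler_sum_nat_widen => // [k|]; [apply: sumr_ge0 | lia].
apply: ler_sum_nat => k /andP[_ hkp]; rewrite [X in _ <= X]big_mkcond /=.
rewrite (eq_big_nat _ _ (F2 := fun n => if n != k then term k n else 0)).
  by apply: ler_sum_nat_widen => // [n|]; [case: ifP | lia].
by move=> n /andP[hqn _]; rewrite ifT //; apply/eqP; lia.
Qed.

Lemma lt_L_of x p q : 0 < mu_of alpha a b -> (a <= p)%N -> (p < q)%N -> (q <= b)%N ->
  0 <= x -> x ^+ 2 * mu_of alpha a b < (q - p)%:R * mu_of alpha a p * mu_of alpha q b ->
  x < L_of alpha a b.
Proof.
move=> mu_gt0 hap hpq hqb x_ge0 hx; rewrite /L_of gt_eqF //; apply: ltr_sqrt_sqr => //.
apply: (@lt_le_trans _ _ (l_of alpha a b (flat_step R p q) / mu_of alpha a b)).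
  by rewrite ltr_pdivlMr //; apply: lt_le_trans hx _; apply: l_of_flat_step_ge.
apply: ub_le_sup; last first.
  exists (flat_step R p q) => //; split; last by rewrite norm2I_flat_step.
  exact: flat_step_out.
exists (2 ^+ b.+1 * (mu_of alpha a b * mu_of alpha a b) / mu_of alpha a b).
by move=> _ [f [_ f_le1] <-]; rewrite ler_pM2r ?invr_gt0 // l_of_le.
Qed.

End QuadraticForm.

Section SeparatedBlocks.
Context {R : realType} {alpha : nat -> R[i]} {a b : nat} {eps : R} {k1 k4 : nat}.
Hypotheses (eps_gt0 : 0 < eps) (k14 : (k1.+2 < k4)%N).
Hypotheses (S1 : Seps_set alpha a b eps k1) (S4 : Seps_set alpha a b eps k4).

Let eps_ge0 : 0 <= eps. Proof. exact: ltW. Qed.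

Let pow14 : (2 * 2 ^ k1.+2 <= 2 ^ k4)%N. Proof. by rewrite -expnS leq_pexp2l. Qed.

Let a_le1 : (a <= 2 ^ k1)%N. Proof. by case: (Seps_set_block eps_ge0 S1). Qed.

Let b_ge4 : (2 ^ k4 <= b)%N.
Proof. by case: (Seps_set_block eps_ge0 S4) => _; rewrite expnS; lia. Qed.

Let a_le_b : (a <= b)%N.
Proof. by move: pow14; rewrite !expnS; lia. Qed.

Lemma separated_blocks_J_of_gt : eps / 2 < J_of alpha a b.
Proof.
have pos1 : (0 < 2 ^ k1)%N by rewrite expn_gt0.
apply: lt_inf_image_Iset_nat => // c /andP[hac hcb].
have half_sqr : (eps / 2) ^+ 2 = eps ^+ 2 / 4 by rewrite expr_div_n; congr (_ / _); ring.
rewrite lt_max; apply/orP; case: (ltnP c (2 ^ k1.+2)) => hc; [right | left].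
- apply: (lt_le_trans _ (sqrt_le_B_of (_ : (c <= 2 ^ k4 <= b)%N))); last first.
    by rewrite b_ge4; lia.
  apply: ltr_sqrt_sqr; first by rewrite divr_ge0.
  by rewrite half_sqr; apply: (Seps_set_right_bound eps_ge0 S4); lia.
- apply: (lt_le_trans _ (sqrt_le_A_of (_ : (a <= 2 ^ k1.+1 - 1 <= c)%N))); last first.
    by move: hc; rewrite !expnS; lia.
  apply: ltr_sqrt_sqr; first by rewrite divr_ge0.
  apply: (le_lt_trans _ (Seps_set_left_bound eps_ge0 S1 _ hc)).
  by rewrite half_sqr; have := sqr_ge0 eps; lra.
Qed.

Lemma separated_blocks_L_of_gt : eps / (2 * Num.sqrt 2) < L_of alpha a b.
Proof.
have pos1 : (0 < 2 ^ k1)%N by rewrite expn_gt0.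
have [_ hb1 hm1] := Seps_set_block eps_ge0 S1.
have mu_gt0 : 0 < mu_of alpha a b.
  apply: (lt_le_trans _ (block_mass_le_mu_of a_le1 hb1)).
  rewrite lt_def block_mass_ge0 andbT; apply/eqP => m0.
  by move: hm1; rewrite m0 mulr0; have := sqr_ge0 eps; lra.
have x_ge0 : 0 <= eps / (2 * Num.sqrt 2) by rewrite divr_ge0 ?mulr_ge0 ?sqrtr_ge0.
have x_sqr : (eps / (2 * Num.sqrt 2)) ^+ 2 = eps ^+ 2 / 4 / 2.
  by rewrite expr_div_n exprMn sqr_sqrtr //; field.
have key X y : mu_of alpha a b <= 2 * y -> eps ^+ 2 / 4 < X ->
    eps ^+ 2 / 4 / 2 * mu_of alpha a b < X * y.
  move=> hy hX; have y_gt0 : 0 < y by lra.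
  have : eps ^+ 2 / 4 * y < X * y by rewrite ltr_pM2r.
  have : eps ^+ 2 / 4 * mu_of alpha a b <= eps ^+ 2 / 4 * (2 * y).
    by rewrite ler_wpM2l // divr_ge0 ?sqr_ge0.
  lra.
have [t [/andP[hat htb] hL hR]] :=
  sum_nat_median _ _ _ (fun j => nrm2_ge0 (alpha j)) a_le_b.
case: (ltnP t (2 ^ k1.+2)) => ht.
- apply: (lt_L_of _ t (2 ^ k4) mu_gt0) => //; first by move: pow14; lia.
  rewrite x_sqr [X in _ < X]mulrAC; apply: (key _ _ hL).
  by apply: (Seps_set_right_bound eps_ge0 S4); lia.
- apply: (lt_L_of _ (2 ^ k1.+1 - 1) t mu_gt0) => //; try by move: ht; rewrite !expnS; lia.
  rewrite x_sqr; apply: (key _ _ hR).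
  apply: (lt_le_trans _ (ltW (Seps_set_left_bound eps_ge0 S1 _ ht))).
  have : 0 < eps ^+ 2 by rewrite exprn_gt0.
  lra.
Qed.

End SeparatedBlocks.

Theorem lemma5p2 (R : realType) (alpha : nat -> R[i])
  (halpha : cvgn (series (fun k => nrm2 (alpha k))))
  (a b : nat) (hab : (a <= b)%N) (eps : R) (heps : 0 < eps) :
  (exists k1 k2 k3 k4 : nat, uniq [:: k1; k2; k3; k4] /\
     [/\ Seps_set alpha a b eps k1, Seps_set alpha a b eps k2,
         Seps_set alpha a b eps k3 & Seps_set alpha a b eps k4]) ->
  eps / 2 < J_of alpha a b /\ eps / (2 * Num.sqrt 2) < L_of alpha a b.
Proof.
move=> [k1 [k2 [k3 [k4 [k_uniq [S1 S2 S3 S4]]]]]].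
have [x1 [x2 [x3 [x4 [/andP[x12 x23] x34 [Sx1 _ _ Sx4]]]]]] :=
  exists_sorted4 k_uniq S1 S2 S3 S4.
have x14 : (x1.+2 < x4)%N by apply: leq_ltn_trans x34; apply: leq_ltn_trans x23.
split; [exact: (separated_blocks_J_of_gt heps x14 Sx1 Sx4) |
        exact: (separated_blocks_L_of_gt heps x14 Sx1 Sx4)].
Qed.
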